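(* Let $A$ be a finite alphabet. Define $P,H\in I(A^* )$ by $P(u,v)=\binom{v}{u}$ and $H(u,v)=\binom{v}{u}\eta(u,v)$. Then $P=e^H$, where $e^H=\delta+H+\frac{1}{2!}H^2+\frac{1}{3!}H^3+\cdots$ (each entry of this series is a finite sum).
   Context: $A^*$ is the set of finite words over the finite alphabet $A$; $|w|$ is the length of $w$. For words $u=a_1\cdots a_k$ and $v=b_1\cdots b_n$, $\binom{v}{u}$ denotes the number of order-preserving injections $\varphi:[k]\to[n]$ with $a_i=b_{\varphi(i)}$ for all $i$ (occurrences of $u$ as a subsequence of $v$). $A^*$ is partially ordered by $u\le v$ iff $\binom{v}{u}>0$. For a locally finite poset $Q$, the incidence algebra $I(Q)$ over $\mathbb{Q}$ consists of all functions $F$ on pairs $(x,y)$ with $x\le y$, with convolution $(FG)(x,y)=\sum_{x\le z\le y}F(x,z)G(z,y)$ and identity $\delta(x,y)=[x=y]$ (Iverson bracket). $\eta(x,y)=[y\text{ covers }x]$; in $A^*$, $v$ covers $u$ iff $u\le v$ and $|v|=|u|+1$. *)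

From HB Require Import structures.
From mathcomp Require Import all_boot all_order all_algebra.
Set Implicit Arguments. Unset Strict Implicit. Unset Printing Implicit Defensive.
Import Order.TTheory GRing.Theory Num.Theory.

(* binom v u : number of order-preserving injections phi : [|u|] -> [|v|]
   with u_i = v_(phi i), i.e. occurrences of u as a subsequence of v. *)
Definition binom (A : finType) (v u : seq A) : nat :=
  #|[set f : {ffun 'I_(size u) -> 'I_(size v)} |
      [forall i : 'I_(size u), forall j : 'I_(size u), (i < j)%N ==> (f i < f j)%N] &&
      [forall i : 'I_(size u), tnth (in_tuple u) i == tnth (in_tuple v) (f i)]]|.

Definition swle (A : finType) (u v : seq A) : bool := (0 < binom v u)%N.

Definition covers (A : finType) (u v : seq A) : bool :=
  swle u v && (size v == (size u).+1).

Local Open Scope ring_scope.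

(* Incidence functions on A^* with values in rat (only values on pairs x <= y matter). *)
Definition incfun (A : finType) := seq A -> seq A -> rat.

Definition idelta (A : finType) : incfun A := fun x y => (x == y)%:R.

(* Convolution: sum over z with x <= z <= y; every such z has |z| <= |y|,
   so z ranges over words of length k <= |y| filtered by interval membership. *)
Definition iconv (A : finType) (F G : incfun A) : incfun A :=
  fun x y => \sum_(k < (size y).+1)
               \sum_(t : k.-tuple A | swle x t && swle (t : seq A) y)
                  F x t * G t y.

Fixpoint ipow (A : finType) (F : incfun A) (k : nat) : incfun A :=
  match k with
  | 0 => @idelta A
  | k'.+1 => iconv (ipow F k') F
  end.

Definition Pfun (A : finType) : incfun A := fun u v => (binom v u)%:R.
Definition Hfun (A : finType) : incfun A :=
  fun u v => (binom v u)%:R * (covers u v)%:R.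

From HB Require Import structures.
From mathcomp Require Import all_boot all_order all_algebra.
From mathcomp Require Import zify ring.
Import Order.TTheory GRing.Theory Num.Theory.
Set Implicit Arguments. Unset Strict Implicit. Unset Printing Implicit Defensive.

(* The occurrences of [u] in [b :: v] split according to whether the first
   letter of [u] is matched with [b]; this gives the Pascal-type recursion
   [binom_cons] for [binom].  Deleting one letter of [y] in all [|y|] ways and
   double counting yields

     sum_{|t| = |y| - 1} binom(y, t) binom(t, x) = (|y| - |x|) binom(y, x),

   so by induction H^k(x, y) = k! binom(y, x) [|y| = |x| + k].  Hence for
   [u <= v] the only nonzero term of sum_k H^k(u, v) / k! is the one with
   k = |v| - |u|, and it equals binom(v, u) = P(u, v). *)

Lemma sum_tuple_count (T : finType) n (s : seq (seq T)) (F : seq T -> nat) :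
  all (fun w => size w == n) s ->
  \sum_(t : n.-tuple T) count_mem (val t) s * F t = \sum_(w <- s) F w.
Proof.
elim: s => [_|w s IH /andP [size_w size_s]].
  by rewrite big_nil big1 // => t _; rewrite mul0n.
rewrite big_cons -IH //=.
under eq_bigr do rewrite mulnDl.
rewrite big_split /= (bigD1 (Tuple size_w)) //= eqxx mul1n big1 ?addn0 // => t neq_t.
by rewrite eq_sym -[w]/(val (Tuple size_w)) val_eqE (negbTE neq_t).
Qed.

Definition shift_ffun m n (h : {ffun 'I_m -> 'I_n}) : {ffun 'I_m -> 'I_n.+1} :=
  [ffun i => lift ord0 (h i)].

Definition cons_ffun m n (h : {ffun 'I_m -> 'I_n}) : {ffun 'I_m.+1 -> 'I_n.+1} :=
  [ffun i => if unlift ord0 i is Some j then lift ord0 (h j) else ord0].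

Lemma cons_ffun0 m n (h : {ffun 'I_m -> 'I_n}) : cons_ffun h ord0 = ord0.
Proof. by rewrite ffunE unlift_none. Qed.

Lemma cons_ffun_lift m n (h : {ffun 'I_m -> 'I_n}) j :
  cons_ffun h (lift ord0 j) = lift ord0 (h j).
Proof. by rewrite ffunE liftK. Qed.

Lemma shift_ffun_inj m n : injective (@shift_ffun m n).
Proof.
move=> h1 h2 /ffunP eq_h; apply/ffunP => i.
by have := eq_h i; rewrite !ffunE => /lift_inj.
Qed.

Lemma cons_ffun_inj m n : injective (@cons_ffun m n).
Proof.
move=> h1 h2 /ffunP eq_h; apply/ffunP => i.
by have := eq_h (lift ord0 i); rewrite !cons_ffun_lift => /lift_inj.
Qed.

Lemma shift_ffun_onto m n (g : {ffun 'I_m -> 'I_n.+1}) :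
  (forall i, g i != ord0) -> exists h, g = shift_ffun h.
Proof.
move=> g_pos; have g_gt0 i : 0 < g i by rewrite lt0n; apply: g_pos.
have lt_g i : (g i).-1 < n by rewrite -ltnS prednK.
exists [ffun i => Ordinal (lt_g i)]; apply/ffunP => i.
by apply: val_inj; rewrite !ffunE /= /bump leq0n add1n prednK.
Qed.

Lemma cons_ffun_onto m n (g : {ffun 'I_m.+1 -> 'I_n.+1}) :
  g ord0 = ord0 -> (forall j, g (lift ord0 j) != ord0) -> exists h, g = cons_ffun h.
Proof.
move=> g0 g_pos.
have [h /ffunP gE] : exists h, [ffun j => g (lift ord0 j)] = shift_ffun h.
  by apply: shift_ffun_onto => j; rewrite ffunE.
exists h; apply/ffunP => i; case: (unliftP ord0 i) => [j ->|->].
  by have := gE j; rewrite !ffunE => ->; rewrite liftK.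
by rewrite cons_ffun0.
Qed.

Section Subwords.
Variable A : finType.

Definition occurrences (u v : seq A) : {set {ffun 'I_(size u) -> 'I_(size v)}} :=
  [set f : {ffun 'I_(size u) -> 'I_(size v)} |
     [forall i : 'I_(size u), forall j : 'I_(size u), (i < j)%N ==> (f i < f j)%N] &&
     [forall i : 'I_(size u), tnth (in_tuple u) i == tnth (in_tuple v) (f i)]].

Lemma binomE (v u : seq A) : binom v u = #|occurrences u v|.
Proof. by []. Qed.

Lemma occurrencesP (x0 : A) (u v : seq A) (f : {ffun 'I_(size u) -> 'I_(size v)}) :
  reflect ((forall i j : 'I_(size u), i < j -> f i < f j) /\
           (forall i : 'I_(size u), nth x0 u i = nth x0 v (f i)))
          (f \in occurrences u v).
Proof.
rewrite inE; apply: (iffP andP) => [[/forallP incr /forallP lab]|[incr lab]]; split.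
- by move=> i j; apply/implyP/(forallP (incr i)).
- by move=> i; have := lab i; rewrite !(tnth_nth x0) => /eqP.
- by apply/forallP => i; apply/forallP => j; apply/implyP/incr.
- by apply/forallP => i; rewrite !(tnth_nth x0) lab.
Qed.

Lemma shift_occurrences u b v (h : {ffun 'I_(size u) -> 'I_(size v)}) :
  (shift_ffun h \in occurrences u (b :: v)) = (h \in occurrences u v).
Proof.
apply/(occurrencesP b)/(occurrencesP b) => -[incr lab]; split.
- by move=> i j ij; have := incr i j ij; rewrite !ffunE.
- by move=> i; rewrite lab ffunE.
- by move=> i j ij; rewrite !ffunE /= ltnS incr.
- by move=> i; rewrite lab ffunE.
Qed.

Lemma cons_occurrences a u b v (h : {ffun 'I_(size u) -> 'I_(size v)}) :
  (cons_ffun h \in occurrences (a :: u) (b :: v)) = (a == b) && (h \in occurrences u v).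
Proof.
apply/(occurrencesP a)/andP => [[incr lab]|[/eqP <- /(occurrencesP a) [incr lab]]].
  split; first by have := lab ord0; rewrite cons_ffun0 /= => ->.
  apply/(occurrencesP a); split.
    by move=> i j ij; have := incr (lift ord0 i) (lift ord0 j) ij; rewrite !cons_ffun_lift.
  by move=> i; have := lab (lift ord0 i); rewrite cons_ffun_lift.
split; last first.
  move=> i; case: (unliftP ord0 i) => [i' ->|->]; rewrite ?cons_ffun_lift ?cons_ffun0 //.
  by rewrite !lift0 /= lab.
move=> i j; case: (unliftP ord0 i) => [i' ->|->]; case: (unliftP ord0 j) => [j' ->|->];
  by rewrite ?cons_ffun0 ?cons_ffun_lift //= ltnS; apply: incr.
Qed.

Lemma binom_nil (v : seq A) : binom v [::] = 1.
Proof.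
rewrite binomE (_ : occurrences _ _ = setT) ?cardsT ?card_ffun ?card_ord //.
by apply/setP => f; rewrite !inE; apply/andP; split; apply/forallP => -[].
Qed.

Lemma binom_nil_cons (a : A) u : binom [::] (a :: u) = 0.
Proof.
by rewrite binomE; apply/eqP; rewrite cards_eq0; apply/eqP/setP => f; case: (f ord0).
Qed.

Lemma card_occurrences_shift a u b v :
  #|occurrences (a :: u) (b :: v) :\: [set f : {ffun 'I_(size u).+1 -> _} | f ord0 == ord0]|
  = binom v (a :: u).
Proof.
rewrite binomE -[RHS](card_imset _ (@shift_ffun_inj _ _)); apply: eq_card => f.
rewrite in_setD [in X in ~~ X]inE andbC.
apply/andP/imsetP => [[occ_f f0]|[h occ_h ->]]; last first.
  by rewrite ffunE eq_sym neq_lift; split => //; rewrite -(shift_occurrences b) in occ_h.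
have [h fE] : exists h, f = shift_ffun h.
  apply: shift_ffun_onto => i; case: (posnP i) => [i0|i_gt0].
    by rewrite (_ : i = ord0) //; apply: val_inj.
  have /(occurrencesP a) [incr _] := occ_f.
  by rewrite -(inj_eq val_inj) -lt0n; apply: leq_ltn_trans (incr ord0 i i_gt0).
by exists h; rewrite // -(shift_occurrences b) -fE.
Qed.

Lemma card_occurrences_head a u b v :
  #|occurrences (a :: u) (b :: v) :&: [set f : {ffun 'I_(size u).+1 -> _} | f ord0 == ord0]|
  = (a == b) * binom v u.
Proof.
have -> : (a == b) * binom v u = #|[set h | (a == b) && (h \in occurrences u v)]|.
  rewrite binomE; case: (a == b); rewrite ?mul1n ?mul0n.
    by apply: eq_card => h; rewrite in_set.
  by apply/esym/eqP; rewrite cards_eq0 -subset0; apply/subsetP => h; rewrite in_set.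
rewrite -[RHS](card_imset _ (@cons_ffun_inj _ _)); apply: eq_card => f.
rewrite in_setI [in X in _ && X]inE.
apply/andP/imsetP => [[occ_f /eqP f0]|[h]]; last first.
  by rewrite in_set -cons_occurrences => occ_h ->; rewrite cons_ffun0.
have [h fE] : exists h, f = cons_ffun h.
  apply: cons_ffun_onto => // j; have /(occurrencesP a) [incr _] := occ_f.
  by have := incr ord0 (lift ord0 j) isT; rewrite f0 -(inj_eq val_inj) -lt0n.
by exists h; rewrite // in_set -cons_occurrences -fE.
Qed.

Lemma binom_cons (b a : A) v u :
  binom (b :: v) (a :: u) = binom v (a :: u) + (a == b) * binom v u.
Proof.
rewrite binomE -(cardsID [set f : {ffun 'I_(size u).+1 -> _} | f ord0 == ord0]).
by rewrite card_occurrences_head card_occurrences_shift addnC.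
Qed.

Lemma binom_small (v u : seq A) : size v < size u -> binom v u = 0.
Proof.
elim: v u => [|b v IH] [|a u] //= lt_vu; first exact: binom_nil_cons.
by rewrite binom_cons !IH ?muln0 //= ltnW.
Qed.

Lemma binom_eq_size (v u : seq A) : size u = size v -> binom v u = (u == v).
Proof.
elim: v u => [|b v IH] [|a u] //; first by rewrite binom_nil.
by case=> eq_uv; rewrite binom_cons binom_small /= ?eq_uv // IH // eqseq_cons mulnb.
Qed.

Lemma swle_size (u v : seq A) : swle u v -> size u <= size v.
Proof. by apply: contraTT; rewrite -ltnNge /swle => /binom_small ->. Qed.

Fixpoint deletions (y : seq A) : seq (seq A) :=
  if y is b :: y' then y' :: map (cons b) (deletions y') else [::].

Lemma size_deletions y : size (deletions y) = size y.
Proof. by elim: y => //= b y <-; rewrite size_map. Qed.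

Lemma size_in_deletions y d : d \in deletions y -> (size d).+1 = size y.
Proof.
by elim: y d => [|b y IH] d //=; rewrite inE => /predU1P [-> //|/mapP [d' /IH <- ->]].
Qed.

Lemma count_deletions y t : (size t).+1 = size y -> count_mem t (deletions y) = binom y t.
Proof.
elim: y t => [|b y IH] [|a t] //= [size_t].
  by case: y {IH} size_t => // _; rewrite binom_nil.
rewrite binom_cons (binom_eq_size (u := a :: t)) ?size_t // eq_sym count_map -(IH t size_t).
congr (_ + _); rewrite [LHS](eq_count (a2 := fun d => (a == b) && (d == t))) => [|d]; last first.
  by rewrite /= eqseq_cons eq_sym.
by case: (a == b); rewrite ?mul1n ?count_pred0.
Qed.

Lemma sum_binom_deletions y x :
  \sum_(d <- deletions y) binom d x = (size y - size x) * binom y x.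
Proof.
elim: y x => [|b y IH] x /=; first by rewrite big_nil.
rewrite big_cons big_map; case: x => [|a x].
  under eq_bigr do rewrite binom_nil.
  by rewrite sum1_size size_deletions !binom_nil subn0 muln1.
under eq_bigr do rewrite binom_cons.
rewrite big_split -big_distrr /= !IH binom_cons /= subSS.
case: (ltnP (size x) (size y)) => [lt_xy|le_yx]; first by rewrite -(subnSK lt_xy); nia.
by rewrite binom_small ?ltnS // (eqP le_yx) !(mul0n, muln0).
Qed.

Lemma sum_binom_tuple n y x : size y = n.+1 ->
  \sum_(t : n.-tuple A) binom y t * binom t x = (size y - size x) * binom y x.
Proof.
move=> size_y; rewrite -sum_binom_deletions -(@sum_tuple_count _ n).
  by apply: eq_bigr => t _; rewrite count_deletions // size_tuple size_y.
by apply/allP => d /size_in_deletions; rewrite size_y => -[->].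
Qed.

End Subwords.

Local Open Scope ring_scope.

Section Incidence.
Variable A : finType.
Implicit Types (F G : incfun A) (x y : seq A).

Lemma iconv_sum_tuples F G x y :
  (forall t, ~~ swle x t -> F x t = 0) -> (forall t, ~~ swle t y -> G t y = 0) ->
  iconv F G x y = \sum_(k < (size y).+1) \sum_(t : k.-tuple A) F x t * G t y.
Proof.
move=> F0 G0; apply: eq_bigr => k _; rewrite big_mkcond; apply: eq_bigr => t _.
by case: ifPn => //; rewrite negb_and => /orP [/F0 -> | /G0 ->]; rewrite (mul0r, mulr0).
Qed.

Lemma Hfun_binom x y : Hfun x y = (binom y x * (size y == (size x).+1))%N%:R.
Proof. by rewrite /Hfun /covers /swle -natrM; case: (binom y x). Qed.

Lemma sum_Hfun_chain k x y :
  (\sum_(j < (size y).+1) \sum_(t : j.-tuple A)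
     (k`! * binom t x * (size t == size x + k)) * (binom y t * (size y == (size t).+1))
   = (k.+1)`! * binom y x * (size y == size x + k.+1))%N.
Proof.
case size_y: (size y) => [|n].
  by rewrite addnS muln0 big1 // => j _; rewrite big1 // => t _; rewrite !muln0.
(* Only words of length n can be covered by y. *)
rewrite (bigD1 (Ordinal (leqnSn n.+1))) //= [X in (_ + X)%N]big1 ?addn0 => [|j neq_j].
  rewrite (eq_bigr (fun t : n.-tuple A => k`! * (n == size x + k) * (binom y t * binom t x))%N)
    => [|t _]; last by rewrite size_tuple eqxx muln1; ring.
  rewrite -big_distrr /= sum_binom_tuple // size_y addnS eqSS.
  case: eqP => [->|_]; last by rewrite !(muln0, mul0n).
  by rewrite -addnS addKn factS; ring.
rewrite big1 // => t _; rewrite size_tuple eqSS (_ : n == j = false) ?muln0 //.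
by apply: contraNF neq_j => /eqP n_j; apply/eqP/val_inj.
Qed.


Lemma ipow_Hfun k x y :
  ipow (@Hfun A) k x y = (k`! * binom y x * (size y == size x + k))%N%:R.
Proof.
elim: k x y => [|k IH] x y /=.
  rewrite /idelta addn0 mul1n; case: (eqVneq (size y) (size x)) => [eq_yx|neq_yx].
    by rewrite binom_eq_size ?eq_yx // muln1.
  have -> : (x == y) = false by apply: contraNF neq_yx => /eqP ->.
  by rewrite /= muln0.
rewrite iconv_sum_tuples => [|t|t]; last 2 first.
- by rewrite IH /swle -leqNgt leqn0 => /eqP ->; rewrite muln0 mul0n.
- by rewrite Hfun_binom /swle -leqNgt leqn0 => /eqP ->.
rewrite -sum_Hfun_chain natr_sum; apply: eq_bigr => j _.
by rewrite natr_sum; apply: eq_bigr => t _; rewrite IH Hfun_binom -natrM.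
Qed.

End Incidence.

Unset Implicit Arguments.

Theorem mainTheorem2 (A : finType) (u v : seq A) :
  swle u v ->
  exists N : nat, forall n : nat, (N <= n)%N ->
    \sum_(k < n) (k`!%:R)^-1 * ipow (@Hfun A) k u v = @Pfun A u v.
Proof.
move=> le_uv; have size_uv := swle_size le_uv.
exists (size v - size u).+1 => n lt_n.
rewrite (bigD1 (Ordinal lt_n)) //= big1 ?addr0 => [|k neq_k]; rewrite ipow_Hfun.
  rewrite subnKC // eqxx muln1 natrM mulrA mulVf ?mul1r //.
  by rewrite pnatr_eq0 -lt0n fact_gt0.
rewrite (_ : size v == _ = false) ?muln0 ?mulr0 //.
by apply: contraNF neq_k => /eqP size_v; apply/eqP/val_inj; rewrite /= size_v addKn.
Qed.
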